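(* Let $G$ be a graph, $(\mathcal T,\{B_i\})$ a tree decomposition of $G$, $\{\mu_L\}$ a consistent family of distributions for it, and $f$ the output of SC-Round on these inputs. Let $e\notin V(G)$ be a new dummy vertex and let $(\mathcal T,\{B'_i\})$ with $B'_i=B_i\cup\{e\}$. Then there exists a consistent family $\{\mu'_{L'}\}$ for $(\mathcal T,\{B'_i\})$, indexed by $L'=L\cup\{e\}$, which is symmetric, i.e. $\Pr_{g\sim\mu'_{L'}}[g=g']=\Pr_{g\sim\mu'_{L'}}[g=\overline{g'}]$ for all $L'$-assignments $g'$, such that the output $f^*$ of SC-Round on $(\mathcal T,\{B'_i\})$ with $\{\mu'_{L'}\}$ satisfies, for every $V(G)$-assignment $f'$, $$\Pr[f=f']+\Pr[f=\overline{f'}] = \Pr[f^*|_{V(G)}=f']+\Pr[f^*|_{V(G)}=\overline{f'}].$$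
   Context: For a finite set $X$, an $X$-assignment is a map $X\to\{0,1\}$; its mirror is $\overline{g}=1-g$. Consistent family for a tree decomposition $(\mathcal T,\{B_i\})$ of $G$: for every set $L=B_i\cup\{s,t\}$ ($i\in V(\mathcal T)$, $s,t$ vertices) a distribution $\mu_L$ on $L$-assignments such that marginals of $\mu_L,\mu_{L'}$ agree on $L\cap L'$. SC-Round: choose a start node $i_0$, sample $f|_{B_{i_0}}\sim\mu_{B_{i_0}}$; process remaining nodes in non-decreasing distance from $i_0$; for node $i$ with already processed neighbour $j$, let $B^+=B_i\cap B_j$, $B^-=B_i\setminus B^+$, and sample $f|_{B^-}$ from $\mu_{B_i}$ conditioned on agreement with $f$ on $B^+$. Output $f$. *)

From mathcomp Require Import all_boot all_order all_algebra.
Set Implicit Arguments. Unset Strict Implicit. Unset Printing Implicit Defensive.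
Import Order.TTheory GRing.Theory Num.Theory.
Local Open Scope ring_scope.

Definition simple_graph (V : finType) (gE : rel V) : Prop :=
  symmetric gE /\ irreflexive gE.

Definition acyclic (T : finType) (tE : rel T) : Prop :=
  forall (x : T) (p : seq T),
    uniq (x :: p) -> (2 <= size p)%N -> path tE x p -> ~~ tE (last x p) x.

Definition is_tree (T : finType) (tE : rel T) : Prop :=
  [/\ (0 < #|T|)%N, simple_graph tE, (forall x y, connect tE x y) & acyclic tE].

Definition tree_decomp (V T : finType) (gE : rel V) (tE : rel T)
    (B : T -> {set V}) : Prop :=
  [/\ forall v, exists i, v \in B i,
      forall u v, gE u v -> exists i, (u \in B i) && (v \in B i)
    & forall v i j, v \in B i -> v \in B j ->
        connect [rel x y | [&& tE x y, v \in B x & v \in B y]] i j].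

(* An X-assignment (X : {set V}) is represented canonically by a total
   function V -> bool that is false outside X. *)
Definition restr (V : finType) (X : {set V}) (g : {ffun V -> bool}) :
  {ffun V -> bool} := [ffun x => (x \in X) && g x].

Definition is_assign (V : finType) (X : {set V}) (g : {ffun V -> bool}) : bool :=
  restr X g == g.

Definition mirrorL (V : finType) (X : {set V}) (g : {ffun V -> bool}) :
  {ffun V -> bool} := [ffun x => (x \in X) && ~~ g x].

Definition mirror (V : finType) (g : {ffun V -> bool}) : {ffun V -> bool} :=
  [ffun x => ~~ g x].

Definition is_distr (R : realFieldType) (V : finType) (X : {set V})
    (m : {ffun V -> bool} -> R) : Prop :=
  [/\ forall g, 0 <= m g,
      forall g, ~~ is_assign X g -> m g = 0
    & \sum_g m g = 1].

Definition marg (R : realFieldType) (V : finType) (S : {set V})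
    (m : {ffun V -> bool} -> R) (g : {ffun V -> bool}) : R :=
  \sum_(h | restr S h == g) m h.

(* index sets L = B_i \cup {s,t} (with {s,t} possibly empty, so that the
   bags B_i themselves are always indices) *)
Definition is_index (V T : finType) (B : T -> {set V}) (L : {set V}) : Prop :=
  exists i, L = B i \/ exists s t, L = B i :|: [set s; t].

Definition consistent_family (R : realFieldType) (V T : finType)
    (B : T -> {set V}) (mu : {set V} -> {ffun V -> bool} -> R) : Prop :=
  (forall L, is_index B L -> is_distr L (mu L)) /\
  (forall L L', is_index B L -> is_index B L' ->
     forall g, marg (L :&: L') (mu L) g = marg (L :&: L') (mu L') g).

Definition symmetric_family (R : realFieldType) (V T : finType)
    (B : T -> {set V}) (mu : {set V} -> {ffun V -> bool} -> R) : Prop :=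
  forall L, is_index B L ->
    forall g, is_assign L g -> mu L g = mu L (mirrorL L g).

Definition avoid (T : finType) (tE : rel T) (i : T) : rel T :=
  [rel x y | [&& tE x y, x != i & y != i]].

(* the neighbour of i on the path to the start node i0 (for i <> i0);
   this is the unique already-processed neighbour of i when nodes are
   processed in non-decreasing distance from i0 *)
Definition parent (T : finType) (tE : rel T) (i0 i : T) : T :=
  odflt i [pick j | tE i j && connect (avoid tE i) j i0].

(* Pr[ sampling f|B^- from mu_{B_i} conditioned on f|B^+ gives the values
   of f ], with B^+ = B_i \cap B_j, j the parent of i.  (Since f|B_i is
   determined by f|B^+ and f|B^-, this is mu_{B_i}(f|B_i)/marginal.)
   Zero if the conditioning event has probability zero. *)
Definition sc_step (R : realFieldType) (V T : finType) (tE : rel T)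
    (B : T -> {set V}) (mu : {set V} -> {ffun V -> bool} -> R)
    (i0 i : T) (f : {ffun V -> bool}) : R :=
  let S := B i :&: B (parent tE i0 i) in
  let d := marg S (mu (B i)) (restr S f) in
  if d == 0 then 0 else mu (B i) (restr (B i) f) / d.

(* Pr[ SC-Round started at i0 outputs f ] *)
Definition sc_prob (R : realFieldType) (V T : finType) (tE : rel T)
    (B : T -> {set V}) (mu : {set V} -> {ffun V -> bool} -> R)
    (i0 : T) (f : {ffun V -> bool}) : R :=
  mu (B i0) (restr (B i0) f) * \prod_(i | i != i0) sc_step tE B mu i0 i f.

Definition extB (V T : finType) (B : T -> {set V}) (i : T) : {set option V} :=
  (Some @: B i) :|: [set None].

Definition restrV (V : finType) (g : {ffun option V -> bool}) : {ffun V -> bool} :=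
  [ffun v => g (Some v)].

Definition sc_prob_restr (R : realFieldType) (V T : finType) (tE : rel T)
    (B' : T -> {set option V}) (mu' : {set option V} -> {ffun option V -> bool} -> R)
    (i0 : T) (f' : {ffun V -> bool}) : R :=
  \sum_(g | restrV g == f') sc_prob tE B' mu' i0 g.

From mathcomp Require Import all_boot all_order all_algebra.
From mathcomp.algebra_tactics Require Import ring lra.
Import Order.TTheory GRing.Theory Num.Theory.
Set Implicit Arguments. Unset Strict Implicit. Unset Printing Implicit Defensive.
Local Open Scope ring_scope.

(* The dummy vertex e = [None] records a fair coin: the new family gives g
   probability mu_L(g|_L xor g(e)) / 2, i.e. it is the symmetrization of mu.
   Its marginals are the symmetrized marginals of mu, so it is consistent,
   and SC-Round on it is SC-Round on mu with the output mirrored exactly when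
   e gets value 1; hence f*|_V is f or its mirror with probability 1/2 each.
   The start nodes may differ: moving the start of SC-Round from i0 to a
   neighbour j only exchanges the factors of i0 and j, which agree by
   consistency on the bags B_i0 and B_j. *)

Section Assignments.

Variable V : finType.
Implicit Types (X Y : {set V}) (g k : {ffun V -> bool}).

Lemma is_assignP X g :
  reflect (forall v, v \notin X -> g v = false) (is_assign X g).
Proof.
apply: (iffP eqP) => [gX v vX | gX]; first by rewrite -gX ffunE (negbTE vX).
by apply/ffunP => v; rewrite ffunE; case: (boolP (v \in X)) => //= /gX.
Qed.

Lemma restr_assign X g : is_assign X (restr X g).
Proof. by apply/is_assignP => v vX; rewrite ffunE (negbTE vX). Qed.

Lemma mirrorL_assign X g : is_assign X (mirrorL X g).
Proof. by apply/is_assignP => v vX; rewrite ffunE (negbTE vX). Qed.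

Lemma mirrorK : involutive (@mirror V).
Proof. by move=> f; apply/ffunP => v; rewrite !ffunE negbK. Qed.

Definition flip_on (c : bool) X k : {ffun V -> bool} :=
  [ffun v => ((v \in X) && c) (+) k v].

Lemma flip_onK c X : involutive (flip_on c X).
Proof. by move=> k; apply/ffunP => v; rewrite !ffunE addbA addbb. Qed.

Lemma flip_on_assign c X k : is_assign X (flip_on c X k) = is_assign X k.
Proof.
apply/is_assignP/is_assignP => kX v vX; have := kX v vX;
  by rewrite ffunE (negbTE vX).
Qed.

Lemma restr_flip_on c X Y k :
  Y \subset X -> restr Y (flip_on c X k) = flip_on c Y (restr Y k).
Proof.
move/subsetP=> YX; apply/ffunP => v; rewrite !ffunE.
by case: (boolP (v \in Y)) => // /YX ->.
Qed.

Lemma sum_flip_on (M : nmodType) c X (F : {ffun V -> bool} -> M) :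
  \sum_k F (flip_on c X k) = \sum_k F k.
Proof. exact/esym/(reindex_inj (inv_inj (flip_onK c X))). Qed.

Lemma marg_flip_on (R : realFieldType) c X Y (m : {ffun V -> bool} -> R) r :
  Y \subset X ->
  \sum_(k | restr Y k == r) m (flip_on c X k) = marg Y m (flip_on c Y r).
Proof.
move=> YX; rewrite /marg [RHS](reindex_inj (inv_inj (flip_onK c X))) /=.
apply: eq_bigl => k; rewrite restr_flip_on //.
exact/esym/inj_eq/inv_inj/flip_onK.
Qed.

Lemma marg_nonassign (R : realFieldType) X (m : {ffun V -> bool} -> R) g :
  ~~ is_assign X g -> marg X m g = 0.
Proof.
move=> gX; rewrite /marg big_pred0 // => h.
by apply: contraNF gX => /eqP <-; apply: restr_assign.
Qed.

End Assignments.

Section DummyVertex.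

Variable V : finType.
Implicit Types (X L : {set option V}) (g : {ffun option V -> bool}).
Implicit Types (k : {ffun V -> bool}).

Definition ext (b : bool) k : {ffun option V -> bool} :=
  [ffun o => if o is Some v then k v else b].

Definition unflip g : {ffun V -> bool} := [ffun v => g None (+) g (Some v)].

Lemma ext_None b k : ext b k None = b.
Proof. by rewrite ffunE. Qed.

Lemma restrV_ext b k : restrV (ext b k) = k.
Proof. by apply/ffunP => v; rewrite !ffunE. Qed.

Lemma unflip_ext b k : unflip (ext b k) = [ffun v => b (+) k v].
Proof. by apply/ffunP => v; rewrite !ffunE. Qed.

Lemma sum_ext (M : nmodType) (P : pred {ffun option V -> bool})
    (F : {ffun option V -> bool} -> M) :
  \sum_(g | P g) F g = \sum_(b : bool) \sum_(k | P (ext b k)) F (ext b k).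
Proof.
rewrite pair_big_dep /= (reindex (fun p => ext p.1 p.2)) //.
exists (fun g => (g None, restrV g)) => [[b k] _ | g _] /=.
  by rewrite ext_None restrV_ext.
by apply/ffunP => -[v|]; rewrite !ffunE.
Qed.

Lemma restr_ext X b k g :
  None \in X ->
  (restr X (ext b k) == g) = (b == g None) && (restr (Some @^-1: X) k == restrV g).
Proof.
move=> XN; apply/eqP/andP => [<- | [/eqP-> /eqP kX]].
  split; apply/eqP; first by rewrite ffunE XN ext_None.
  by apply/ffunP => v; rewrite !ffunE inE.
apply/ffunP => -[v|]; rewrite !ffunE ?XN //.
by have := congr1 (fun f : {ffun V -> bool} => f v) kX; rewrite !ffunE inE.
Qed.

Lemma assign_ext X b k :
  None \in X -> is_assign X (ext b k) = is_assign (Some @^-1: X) k.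
Proof.
move=> XN; apply/is_assignP/is_assignP => kX.
  by move=> v vX; have := kX (Some v); rewrite ffunE; apply; rewrite inE in vX.
by case=> [v|] vX; [rewrite ffunE kX // inE | rewrite XN in vX].
Qed.

Lemma restr_unflip X g :
  None \in X -> is_assign X g ->
  restr (Some @^-1: X) (unflip g) = flip_on (g None) (Some @^-1: X) (restrV g).
Proof.
move=> XN /is_assignP gX; apply/ffunP => v; rewrite !ffunE inE.
by case: (boolP (Some v \in X)) => // /gX ->; rewrite addbF.
Qed.

Lemma restr_unflip_restr X g :
  None \in X ->
  restr (Some @^-1: X) (unflip (restr X g)) = restr (Some @^-1: X) (unflip g).
Proof.
by move=> XN; apply/ffunP => v; rewrite !ffunE inE XN; case: (Some v \in X).
Qed.

Lemma preim_extB (T : finType) (B : T -> {set V}) i : Some @^-1: extB B i = B i.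
Proof. by apply/setP => v; rewrite !inE (mem_imset _ _ (@Some_inj _)) orbF. Qed.

Lemma None_extB (T : finType) (B : T -> {set V}) i : None \in extB B i.
Proof. by rewrite !inE orbT. Qed.

Lemma preim_Some_set2 (s t : option V) :
  Some @^-1: [set s; t] = set0 \/ exists a b, Some @^-1: [set s; t] = [set a; b].
Proof.
case: s t => [a|] [b|]; [right; exists a, b | right; exists a, a
  | right; exists b, b | left]; apply/setP => v; rewrite !inE.
all: by rewrite ?(inj_eq (@Some_inj _)) /= ?orbb ?orbF.
Qed.

Lemma index_extB (T : finType) (B : T -> {set V}) L :
  is_index (extB B) L -> is_index B (Some @^-1: L) /\ None \in L.
Proof.
case=> i [-> | [s [t ->]]].
  by split; [exists i; left; rewrite preim_extB | apply: None_extB].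
split; last by rewrite inE None_extB.
exists i; rewrite preimsetU preim_extB.
case: (preim_Some_set2 s t) => [-> | [a [b ->]]]; first by left; rewrite setU0.
by right; exists a, b.
Qed.

Lemma marg_ext (R : realFieldType) X (m : {ffun option V -> bool} -> R) g :
  None \in X ->
  marg X m g = \sum_(k | restr (Some @^-1: X) k == restrV g) m (ext (g None) k).
Proof.
move=> XN; rewrite /marg (sum_ext (fun h => restr X h == g)) big_bool /=.
rewrite !(eq_bigl _ _ (fun k => restr_ext _ k g XN)).
by case: (g None); rewrite /= big_pred0_eq ?addr0 ?add0r.
Qed.

End DummyVertex.

Section FlipFamily.

Variables (R : realFieldType) (V : finType) (mu : {set V} -> {ffun V -> bool} -> R).
Implicit Types (X L : {set option V}) (g : {ffun option V -> bool}).

Definition flip_family L g : R :=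
  if is_assign L g then mu (Some @^-1: L) (restr (Some @^-1: L) (unflip g)) / 2 else 0.

Lemma flip_family_ext L b k :
  None \in L -> is_distr (Some @^-1: L) (mu (Some @^-1: L)) ->
  flip_family L (ext b k) = mu (Some @^-1: L) (flip_on b (Some @^-1: L) k) / 2.
Proof.
move=> LN [_ mu0 _]; rewrite /flip_family assign_ext //.
case: ifPn => kL; first by rewrite restr_unflip ?assign_ext // ext_None restrV_ext.
by rewrite mu0 ?mul0r ?flip_on_assign.
Qed.

Lemma distr_flip_family L :
  None \in L -> is_distr (Some @^-1: L) (mu (Some @^-1: L)) -> is_distr L (flip_family L).
Proof.
move=> LN muL; have [mu_ge0 mu0 mu1] := muL; split.
- by move=> g; rewrite /flip_family; case: ifP => // _; rewrite divr_ge0 ?ler0n.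
- by move=> g /negbTE gL; rewrite /flip_family gL.
rewrite (sum_ext xpredT) big_bool /=.
under eq_bigr do rewrite flip_family_ext //.
under [X in _ + X]eq_bigr do rewrite flip_family_ext //.
by rewrite -!big_distrl /= !sum_flip_on mu1 -splitr.
Qed.

Lemma marg_flip_family L X g :
  None \in X -> X \subset L -> is_distr (Some @^-1: L) (mu (Some @^-1: L)) ->
  is_assign X g ->
  marg X (flip_family L) g
  = marg (Some @^-1: X) (mu (Some @^-1: L)) (restr (Some @^-1: X) (unflip g)) / 2.
Proof.
move=> XN XL muL gX; have LN : None \in L by apply: subsetP XN.
rewrite marg_ext //; under eq_bigr do rewrite flip_family_ext //.
by rewrite -big_distrl /= marg_flip_on ?preimsetS // restr_unflip.
Qed.

Lemma mirrorL_flip_family L g :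
  None \in L -> is_assign L g -> flip_family L (mirrorL L g) = flip_family L g.
Proof.
move=> LN gL; rewrite /flip_family gL mirrorL_assign; congr (mu _ _ / 2).
apply/ffunP => v; rewrite !ffunE inE LN /=.
by case: (Some v \in L); rewrite //= addbN addNb negbK.
Qed.

End FlipFamily.

Section ExtendedDecomposition.

Variables (R : realFieldType) (V T : finType) (B : T -> {set V}).
Variable mu : {set V} -> {ffun V -> bool} -> R.

Lemma consistent_flip_family :
  consistent_family B mu -> consistent_family (extB B) (flip_family mu).
Proof.
move=> [mu_distr mu_cons]; split.
  by move=> L /index_extB [LB LN]; apply: distr_flip_family => //; apply: mu_distr.
move=> L1 L2 /index_extB [L1B L1N] /index_extB [L2B L2N] g.
have [gL | gL] := boolP (is_assign (L1 :&: L2) g); last by rewrite !marg_nonassign.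
have L12N : None \in L1 :&: L2 by rewrite inE L1N L2N.
rewrite !marg_flip_family ?subsetIl ?subsetIr //; try exact: mu_distr.
by rewrite (preimsetI Some) mu_cons.
Qed.

Lemma symmetric_flip_family : symmetric_family (extB B) (flip_family mu).
Proof. by move=> L /index_extB [_ LN] g gL; rewrite mirrorL_flip_family. Qed.

Variable tE : rel T.

Lemma sc_step_flip_family i0 i g :
  is_distr (B i) (mu (B i)) ->
  sc_step tE (extB B) (flip_family mu) i0 i g = sc_step tE B mu i0 i (unflip g).
Proof.
move=> mu_i; rewrite /sc_step.
set S := extB B i :&: extB B (parent tE i0 i).
have SN : None \in S by rewrite inE !None_extB.
rewrite marg_flip_family ?subsetIl ?restr_assign ?preim_extB //.
rewrite /flip_family restr_assign !restr_unflip_restr ?None_extB // preimsetI !preim_extB.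
rewrite mulf_eq0 invr_eq0 pnatr_eq0 orbF.
by case: eqP => // /eqP d_neq0; field.
Qed.

Lemma sc_prob_flip_family i0 g :
  consistent_family B mu ->
  sc_prob tE (extB B) (flip_family mu) i0 g = sc_prob tE B mu i0 (unflip g) / 2.
Proof.
move=> [mu_distr _]; rewrite /sc_prob {1}/flip_family restr_assign.
rewrite restr_unflip_restr ?None_extB // preim_extB mulrAC.
congr (_ * _ * _); apply: eq_bigr => i _.
by apply/sc_step_flip_family/mu_distr; exists i; left.
Qed.

Lemma sc_prob_restr_flip_family i0 f :
  consistent_family B mu ->
  sc_prob_restr tE (extB B) (flip_family mu) i0 f
  = (sc_prob tE B mu i0 f + sc_prob tE B mu i0 (mirror f)) / 2.
Proof.
move=> mu_cons; rewrite /sc_prob_restr (sum_ext (fun g => restrV g == f)) big_bool /=.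
under eq_bigl do rewrite restrV_ext.
under [X in _ + X]eq_bigl do rewrite restrV_ext.
rewrite !big_pred1_eq !sc_prob_flip_family // !unflip_ext mulrDl addrC.
by congr (_ / 2 + _ / 2); congr sc_prob; apply/ffunP => v; rewrite !ffunE.
Qed.

End ExtendedDecomposition.

Section RootIndependence.

Variables (T : finType) (tE : rel T).
Hypotheses (tE_sym : symmetric tE) (tE_irr : irreflexive tE) (tE_acyclic : acyclic tE).

Lemma avoid_path_notin i k p : path (avoid tE i) k p -> i \notin p.
Proof.
elim: p k => [|y p IHp] k //= /andP [/and3P [_ _ yi] /IHp ip].
by rewrite inE negb_or eq_sym yi.
Qed.

Lemma avoid_connect_neighbours i k r :
  tE i k -> tE i r -> connect (avoid tE i) k r -> k = r.
Proof.
move=> ik ir /connectP [p0 p0_path r_last]; move: ir; rewrite r_last.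
case: (shortenP p0_path) => -[//|y p] p_path p_uniq _ ir; exfalso.
have i_notin : i \notin k :: y :: p.
  rewrite inE negb_or (avoid_path_notin p_path) andbT.
  by apply: contraTneq ik => <-; rewrite tE_irr.
have tE_path : path tE i (k :: y :: p).
  by rewrite /= ik; apply: sub_path p_path => a b /and3P [].
have cycle_uniq : uniq (i :: k :: y :: p) by rewrite cons_uniq i_notin p_uniq.
by move/negP: (tE_acyclic cycle_uniq isT tE_path); apply; rewrite tE_sym.
Qed.

Lemma parent_neighbour i r : tE i r -> parent tE r i = r.
Proof.
move=> ir; rewrite /parent; case: pickP => [k /andP [ik kr] | none] /=.
  exact: avoid_connect_neighbours ik ir kr.
by have := none r; rewrite ir connect0.
Qed.

Lemma parent_root_neighbour i0 j i :
  tE i0 j -> i != i0 -> i != j -> parent tE i0 i = parent tE j i.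
Proof.
move=> i0j i_i0 i_j; rewrite /parent; congr odflt.
apply: eq_pick => k; congr andb.
have i0_j : connect (avoid tE i) i0 j.
  by apply/connect1/and3P; split; rewrite // eq_sym.
have j_i0 : connect (avoid tE i) j i0.
  by apply/connect1/and3P; split; rewrite // 1?tE_sym // eq_sym.
by apply/idP/idP => /connect_trans; [apply | apply].
Qed.

Variables (R : realFieldType) (V : finType) (B : T -> {set V}).
Variable mu : {set V} -> {ffun V -> bool} -> R.
Hypothesis mu_cons : consistent_family B mu.

Lemma sc_prob_neighbour i0 j f : tE i0 j -> sc_prob tE B mu i0 f = sc_prob tE B mu j f.
Proof.
move=> i0j; have j_i0 : j != i0 by apply: contraTneq i0j => ->; rewrite tE_irr.
rewrite /sc_prob (bigD1 j j_i0) [in RHS](bigD1 i0) 1?eq_sym //= !mulrA.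
have -> : \prod_(i | (i != i0) && (i != j)) sc_step tE B mu i0 i f
          = \prod_(i | (i != j) && (i != i0)) sc_step tE B mu j i f.
  rewrite (eq_bigl (fun i => (i != j) && (i != i0))) => [|i]; last exact: andbC.
  by apply: eq_bigr => i /andP [i_j i_i0]; rewrite /sc_step (parent_root_neighbour i0j).
congr (_ * _); rewrite /sc_step parent_neighbour 1?tE_sym // parent_neighbour //.
have [_ /(_ (B i0) (B j))] := mu_cons; rewrite setIC => <-; try by exists i0; left.
  by case: ifP; rewrite ?mulr0 // mulrCA.
by exists j; left.
Qed.

Lemma sc_prob_root_indep i0 i1 f :
  (forall x y, connect tE x y) -> sc_prob tE B mu i0 f = sc_prob tE B mu i1 f.
Proof.
move=> /(_ i0 i1) /connectP [p p_path ->].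
elim: p i0 p_path => [|j p IHp] i0 //= /andP [i0j /IHp <-].
exact: sc_prob_neighbour.
Qed.

End RootIndependence.

Theorem lemmaA2 (R : realFieldType) (V T : finType) (gE : rel V) (tE : rel T)
    (B : T -> {set V}) (mu : {set V} -> {ffun V -> bool} -> R) :
  simple_graph gE -> is_tree tE -> tree_decomp gE tE B ->
  consistent_family B mu ->
  exists mu' : {set option V} -> {ffun option V -> bool} -> R,
    [/\ consistent_family (extB B) mu',
        symmetric_family (extB B) mu'
      & forall (i0 i1 : T) (f' : {ffun V -> bool}),
          sc_prob tE B mu i0 f' + sc_prob tE B mu i0 (mirror f')
          = sc_prob_restr tE (extB B) mu' i1 f'
            + sc_prob_restr tE (extB B) mu' i1 (mirror f')].
Proof.
move=> _ [_ [tE_sym tE_irr] tE_conn tE_acyclic] _ mu_cons.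
exists (flip_family mu); split.
- exact: consistent_flip_family.
- exact: symmetric_flip_family.
move=> i0 i1 f; rewrite !sc_prob_restr_flip_family // mirrorK.
rewrite !(sc_prob_root_indep tE_sym tE_irr tE_acyclic mu_cons i0 i1) //; lra.
Qed.
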